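(* Let $G$ be a finite simple graph with maximum degree $\Delta$. If the induced subgraph $G[\mathrm{core}(G)]$ has a proper $\Delta$-edge coloring, then $G$ has a matching that saturates every vertex of $\mathrm{core}(G)$.
   Context: $\mathrm{core}(G)$ is the set of vertices of $G$ of degree $\Delta$. A proper $\Delta$-edge coloring assigns one of $\Delta$ colors to each edge so that adjacent edges get different colors. *)

From mathcomp Require Import all_boot.
Set Implicit Arguments. Unset Strict Implicit. Unset Printing Implicit Defensive.

Definition simple_graph (T : finType) (e : rel T) : Prop :=
  symmetric e /\ irreflexive e.

Definition nbhd (T : finType) (e : rel T) (x : T) : {set T} := [set y | e x y].
Definition deg (T : finType) (e : rel T) (x : T) : nat := #|nbhd e x|.

Definition max_deg (T : finType) (e : rel T) : nat := \max_(x : T) deg e x.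

Definition core (T : finType) (e : rel T) : {set T} :=
  [set x | deg e x == max_deg e].

Definition induced (T : finType) (e : rel T) (S : {set T}) : rel T :=
  fun x y => [&& x \in S, y \in S & e x y].

(* Values of c
   on non-edges are irrelevant. *)
Definition proper_edge_coloring (T : finType) (e : rel T) (k : nat)
    (c : T -> T -> 'I_k) : Prop :=
  (forall x y, e x y -> c x y = c y x) /\
  (forall x y z, e x y -> e x z -> y != z -> c x y != c x z).

Definition has_proper_edge_coloring (T : finType) (e : rel T) (k : nat) : Prop :=
  exists c : T -> T -> 'I_k, proper_edge_coloring e c.

Definition is_edge (T : finType) (e : rel T) (f : {set T}) : Prop :=
  exists x y, e x y /\ f = [set x; y].

Definition matching (T : finType) (e : rel T) (M : {set {set T}}) : Prop :=
  (forall f, f \in M -> is_edge e f) /\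
  (forall f g, f \in M -> g \in M -> f != g -> [disjoint f & g]).

Definition saturates (T : finType) (M : {set {set T}}) (S : {set T}) : Prop :=
  forall x, x \in S -> exists2 f, f \in M & x \in f.

From mathcomp Require Import all_boot zify.
Set Implicit Arguments. Unset Strict Implicit. Unset Printing Implicit Defensive.

(* Take two disjoint copies of G and make all vertices outside the core, in
   both copies, pairwise adjacent.  Core vertices keep their neighbourhoods, so a
   perfect matching of this doubled graph matches every core vertex inside its
   own copy, and its restriction to the first copy saturates core(G).

   The perfect matching comes from Tutte's theorem.  In the doubled graph core
   vertices have degree Δ and every vertex has at most Δ core neighbours.  If C
   is an odd set of core vertices, each of the Δ colour classes of G[C] is a
   matching and so misses a vertex of C; the degrees inside C thus sum to at most
   Δ(|C| - 1), and at least Δ edges leave C.  Counting edges into X, at most |X|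
   disjoint such sets are separated by X; at most one odd set can meet the clique
   of non-core vertices, and parity rules out exactly |X| + 1 sets.

   Tutte's theorem is proved by Lovász's argument, by induction on the number of
   non-edges.  If the neighbourhood of every non-universal vertex is a clique, the
   non-universal vertices split into cliques, and the odd ones are completed by
   distinct universal vertices.  Otherwise there are edges ab, bc with ac a
   non-edge and d not adjacent to b; perfect matchings of G + ac and G + bd are
   recombined along their alternating cycle through bd. *)

Lemma card_le_exists_inj (T1 T2 : finType) (y0 : T2) (A : {set T1}) (B : {set T2}) :
  #|A| <= #|B| ->
  exists2 f : T1 -> T2, {in A &, injective f} & {in A, forall x, f x \in B}.
Proof.
move=> le_AB; have lt_B x : x \in A -> index x (enum A) < size (enum B).
  by move=> xA; rewrite -cardE (leq_trans _ le_AB) // cardE index_mem mem_enum.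
exists (fun x => nth y0 (enum B) (index x (enum A))) => [x y xA yA /eqP|x xA].
  rewrite nth_uniq ?enum_uniq ?lt_B // => /eqP index_eq.
  have xA' : x \in enum A by rewrite mem_enum.
  by rewrite -(nth_index x xA') index_eq nth_index ?mem_enum.
by rewrite -mem_enum mem_nth ?lt_B.
Qed.

(** * Perfect matchings as involutions *)

Section PerfectMatchingOn.
Variable V : finType.
Implicit Types (e : rel V) (A : {set V}) (f g : V -> V).

Definition perfect_matching_on e A f :=
  forall x, x \in A -> [/\ f x \in A, f (f x) = x & e x (f x)].

Lemma perfect_matching_on_even e A f :
  irreflexive e -> perfect_matching_on e A f -> ~~ odd #|A|.
Proof.
move=> eirr; move: {2}#|A| (leqnn #|A|) => n; elim: n A => [|n IH] A.
  by rewrite leqn0 => /eqP ->.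
move=> leAn fA; have [->|[x xA]] := set_0Vmem A; first by rewrite cards0.
have [fxA fxK exfx] := fA x xA.
have fxx : f x != x by apply: contraTneq exfx => ->; rewrite eirr.
have cardA : #|A| = (#|A :\: [set x; f x]|).+2.
  have sub : [set x; f x] \subset A by rewrite subUset !sub1set xA fxA.
  by rewrite -(cardsID [set x; f x] A) (setIidPr sub) cards2 eq_sym fxx add2n.
rewrite cardA /= negbK; apply: IH; first by move: leAn; rewrite cardA; lia.
move=> y; rewrite !inE negb_or => /andP[/andP[yx yfx] yA].
have [fyA fyK eyfy] := fA y yA; rewrite fyA fyK andbT; split=> //.
apply/norP; split; apply/eqP => fyE.
  by move: yfx; rewrite -fyK fyE eqxx.
by move: yx; rewrite -fyK fyE fxK eqxx.
Qed.

Definition clique e A := {in A &, forall x y, x != y -> e x y}.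

(* Pairs the elements of ranks 2i and 2i + 1 in enum A. *)
Definition pairing A x : V :=
  let i := index x (enum A) in nth x (enum A) (if odd i then i.-1 else i.+1).

Lemma pairing_clique e A :
  ~~ odd #|A| -> clique e A -> perfect_matching_on e A (pairing A).
Proof.
move=> evenA clA x xA; rewrite /pairing.
pose partner k := if odd k then k.-1 else k.+1.
have partnerK k : partner (partner k) = k.
  by rewrite /partner; case: (odd k) (odd_double_half k) => /= <-;
    rewrite ?odd_double //= odd_double.
have partner_neq k : partner k != k.
  by rewrite /partner; case: (odd k) (odd_double_half k) => /=; lia.
have partner_lt k : k < #|A| -> partner k < #|A|.
  move: (odd_double_half #|A|); rewrite (negbTE evenA) /partner.
  by case: (odd k) (odd_double_half k) => /=; lia.
set s := enum A; set i := index x s; rewrite -/(partner i).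
have lt_i : i < #|A| by rewrite cardE index_mem mem_enum.
have sjA : nth x s (partner i) \in A by rewrite -mem_enum mem_nth // -cardE partner_lt.
have index_sj : index (nth x s (partner i)) s = partner i.
  by rewrite index_uniq ?enum_uniq // -cardE partner_lt.
rewrite index_sj -/(partner _) partnerK (set_nth_default x) -?cardE ?partner_lt //.
rewrite nth_index ?mem_enum //; split=> //; apply: clA => //.
by apply: contraNneq (partner_neq i) => E; rewrite -{1}index_sj -E.
Qed.

Lemma perfect_matching_on_partition e (P : {set {set V}}) :
  trivIset P -> (forall B, B \in P -> ~~ odd #|B| /\ clique e B) ->
  perfect_matching_on e (cover P) (fun x => pairing (pblock P x) x).
Proof.
move=> trivP blockP x xP; have BP := pblock_mem xP; have [evenB cliqueB] := blockP _ BP.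
have xB : x \in pblock P x by rewrite mem_pblock.
have [yB yK exy] := pairing_clique evenB cliqueB xB.
rewrite (def_pblock trivP BP yB) yK; split=> //.
by apply/bigcupP; exists (pblock P x).
Qed.

Lemma perfect_matching_on_glue e A f g :
  perfect_matching_on e A f -> perfect_matching_on e (~: A) g ->
  perfect_matching_on e [set: V] (fun x => if x \in A then f x else g x).
Proof.
move=> fA gA x _; case: (boolP (x \in A)) => [xA | xA].
  by have [-> -> ?] := fA x xA.
have [] := gA x; rewrite ?inE // => /negPf -> -> ?.
by split.
Qed.

End PerfectMatchingOn.

(** * Alternating walks *)

Section AlternatingWalk.
Variables (V : finType) (f g : V -> V).
Hypotheses (fK : involutive f) (gK : involutive g).
Hypotheses (f_fix : forall x, f x != x) (g_fix : forall x, g x != x).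

Fixpoint alt_walk (x : V) (n : nat) : V :=
  if n is n'.+1 then (if odd n' then g else f) (alt_walk x n') else x.

Lemma alt_walk_back x n : alt_walk x n = (if odd n then g else f) (alt_walk x n.+1).
Proof. by rewrite /=; case: (odd n); rewrite ?fK ?gK. Qed.

Lemma alt_walk_odd_neq x i k : alt_walk x i != alt_walk x (i + k.*2.+1).
Proof.
elim: k i => [|k IH] i.
  by rewrite addn1 /= eq_sym; case: (odd i).
apply: contraNneq (IH i.+1) => walk_eq.
have -> : i.+1 + k.*2.+1 = i + k.+1.*2 by rewrite doubleS; lia.
by apply/eqP; rewrite [RHS]alt_walk_back -addnS -walk_eq oddD odd_double addbF.
Qed.

Lemma alt_walk_parity x i j : alt_walk x i = alt_walk x j -> ~~ odd (i + j).
Proof.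
wlog le_ij : i j / i <= j => [hw|walk_eq].
  by case: (leqP i j) => [|/ltnW] /hw // h /esym /h; rewrite addnC.
apply/negP => odd_ij; have := odd_double_half (j - i).
have -> : odd (j - i) by move: odd_ij; rewrite -{1}(subnKC le_ij) !oddD addKb.
move=> /esym /(congr1 (addn i)); rewrite subnKC // add1n => jE.
by move: (alt_walk_odd_neq x i (j - i)./2); rewrite -jE walk_eq eqxx.
Qed.

Lemma alt_walk_double x k : alt_walk x k.*2 = iter k (g \o f) x.
Proof. by elim: k => //= k <-; rewrite odd_double. Qed.

Lemma alt_walk_return x : exists2 n, odd n & g (alt_walk x n) = x.
Proof.
have gf_inj : injective (g \o f) by apply: inj_comp; apply: can_inj.
exists (order (g \o f) x).-1.*2.+1; first by rewrite /= odd_double.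
rewrite -[in RHS](iter_order gf_inj x) -(prednK (order_gt0 _ _)) -alt_walk_double.
by rewrite doubleS /= odd_double.
Qed.

Definition walk_prefix x k := [set alt_walk x i | i : 'I_k].

Lemma walk_prefixP x k v :
  reflect (exists2 i, i < k & v = alt_walk x i) (v \in walk_prefix x k).
Proof.
apply: (iffP imsetP) => [[i _ ->]|[i lt_ik ->]]; first by exists i.
by exists (Ordinal lt_ik).
Qed.

Lemma walk_prefix_f x k v :
  ~~ odd k -> v \in walk_prefix x k -> f v \in walk_prefix x k.
Proof.
move=> even_k /walk_prefixP [i lt_ik ->]; apply/walk_prefixP.
have := odd_double_half k; have := odd_double_half i; rewrite (negbTE even_k).
case: i lt_ik => [|i] lt_ik; first by exists 1 => //=; lia.
case: (boolP (odd i)) => odd_i /=; rewrite odd_i /= => iE kE.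
  by exists i.+2 => /=; [lia | rewrite odd_i].
by exists i; [lia | rewrite /= (negbTE odd_i) fK].
Qed.

Lemma walk_prefix_g_exit x k v :
  ~~ odd k -> v \notin walk_prefix x k -> g v \in walk_prefix x k ->
  v = g x \/ v = alt_walk x k.
Proof.
move=> even_k vZ /walk_prefixP [i lt_ik /(congr1 g)]; rewrite gK => vE.
case: i lt_ik vE => [|i] lt_ik vE; [by left | right].
have := odd_double_half k; have := odd_double_half i; rewrite (negbTE even_k).
case: (boolP (odd i)) vE => odd_i /= vE iE kE.
  by case/walk_prefixP: vZ; exists i; [lia | rewrite vE odd_i gK].
have [lt_ik2 | ge_ik2] := ltnP i.+2 k.
  by case/walk_prefixP: vZ; exists i.+2; rewrite //= vE (negbTE odd_i).
have -> : k = i.+2 by lia.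
by rewrite vE /= (negbTE odd_i).
Qed.

End AlternatingWalk.

(** * Tutte's theorem *)

Section Tutte.
Variable V : finType.
Implicit Types (e : rel V) (X C : {set V}) (P : {set {set V}}) (p : V -> V).

Definition separates e X C :=
  forall x y, x \in C -> e x y -> (y \in C) || (y \in X).

(* Equivalent to the usual condition on the odd components of G - X, each odd
   set of such a family containing an odd component. *)
Definition tutte_condition e := forall X P,
  (forall C : {set V}, C \in P -> [/\ odd #|C|, [disjoint C & X] & separates e X C]) ->
  trivIset P -> #|P| <= #|X|.

Definition add_edge e u v : rel V :=
  fun x y => [|| e x y, (x == u) && (y == v) | (x == v) && (y == u)].

Definition universal e := [set u | [forall v, (v != u) ==> e u v]].

Definition nonedges e := [set uv : V * V | (uv.1 != uv.2) && ~~ e uv.1 uv.2].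

Lemma add_edge_sym e u v : symmetric e -> symmetric (add_edge e u v).
Proof.
move=> esym x y; rewrite /add_edge esym; congr (_ || _).
by rewrite orbC; congr (_ || _); apply: andbC.
Qed.

Lemma add_edge_irr e u v : irreflexive e -> u != v -> irreflexive (add_edge e u v).
Proof.
move=> eirr neq_uv x; rewrite /add_edge eirr /=.
by apply/norP; split; apply: contraNN neq_uv => /andP[/eqP <- /eqP <-].
Qed.

Lemma sub_add_edge e u v : subrel e (add_edge e u v).
Proof. by move=> x y exy; rewrite /add_edge exy. Qed.

Lemma add_edge_other e u v x y : add_edge e u v x y -> x != u -> x != v -> e x y.
Proof. by case/or3P=> // /andP[/eqP -> _]; rewrite eqxx. Qed.

Lemma add_edge_unused e u v p :
  perfect_matching_on (add_edge e u v) [set: V] p -> p u != v ->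
  perfect_matching_on e [set: V] p.
Proof.
move=> pP puv x _; have [_ pK epx] := pP x (in_setT x); split=> //.
case/or3P: epx => // /andP[/eqP xE /eqP pxE].
  by rewrite -xE pxE eqxx in puv.
by rewrite -pxE pK xE eqxx in puv.
Qed.

Section Exchange.
Variables (e : rel V) (a b c d : V) (p1 p2 : V -> V).
Hypotheses (esym : symmetric e) (eirr : irreflexive e).
Hypotheses (eab : e a b) (ebc : e b c) (neq_ac : a != c).
Hypotheses (nebd : ~~ e b d) (neq_bd : b != d).
Hypothesis p1P : perfect_matching_on (add_edge e a c) [set: V] p1.
Hypothesis p2P : perfect_matching_on (add_edge e b d) [set: V] p2.
Hypotheses (p1a : p1 a = c) (p2b : p2 b = d).

Let p1K : involutive p1. Proof. by move=> x; have [] := p1P (in_setT x). Qed.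
Let p2K : involutive p2. Proof. by move=> x; have [] := p2P (in_setT x). Qed.

Let p1_fix x : p1 x != x.
Proof.
have [_ _] := p1P (in_setT x); apply: contraTneq => ->.
by rewrite (add_edge_irr eirr neq_ac).
Qed.

Let p2_fix x : p2 x != x.
Proof.
have [_ _] := p2P (in_setT x); apply: contraTneq => ->.
by rewrite (add_edge_irr eirr neq_bd).
Qed.

Let w := alt_walk p1 p2 d.
Let hits := [set a; b; c].

Let d_hits : d \notin hits.
Proof.
rewrite /hits !inE; apply/negP; case/orP => [/orP[]|] /eqP dE.
- by move: nebd; rewrite dE esym eab.
- by move: neq_bd; rewrite dE eqxx.
- by move: nebd; rewrite dE ebc.
Qed.

Let p1_matching_on_prefix n :
  ~~ odd n -> {in walk_prefix p1 p2 d n, forall z, z != a /\ z != c} ->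
  perfect_matching_on e (walk_prefix p1 p2 d n) p1.
Proof.
move=> even_n avoid z zZ; have [za zc] := avoid z zZ.
have [_ _ ep1] := p1P (in_setT z).
by split; [exact: walk_prefix_f | exact: p1K | exact: add_edge_other ep1 za zc].
Qed.

(* The walk from d, alternating p1 and p2, meets b before a and c: it has then
   closed the alternating cycle through bd, on which p1 can replace p2. *)
Lemma exchange_at_b n :
  w n = b -> (forall i, i < n -> w i \notin hits) ->
  exists p, perfect_matching_on e [set: V] p.
Proof.
move=> wn before_n.
have odd_n : odd n.
  case: n wn before_n => [w0|n wn _]; first by move: neq_bd; rewrite -w0 /= eqxx.
  rewrite oddS; apply/negP => odd_n; have walk_eq : w n = w 0.
    by rewrite /w (alt_walk_back p1K p2K) odd_n -/w wn p2b.
  by move: (alt_walk_parity p1K p2K p1_fix p2_fix walk_eq); rewrite addn0 odd_n.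
pose Z := walk_prefix p1 p2 d n.+1.
have even_Z : ~~ odd n.+1 by rewrite oddS odd_n.
have wZ i : i <= n -> w i \in Z by move=> le_in; apply/walk_prefixP; exists i.
have bZ : b \in Z by rewrite -wn wZ.
have dZ : d \in Z by apply: (wZ 0).
have p1Z : perfect_matching_on e Z p1.
  apply: p1_matching_on_prefix even_Z _ => z /walk_prefixP [i].
  rewrite ltnS leq_eqVlt => /orP[/eqP -> -> | /before_n + ->].
    rewrite -/w wn; split; apply/eqP => bE.
    - by move: eab; rewrite bE eirr.
    - by move: ebc; rewrite bE eirr.
  by rewrite /hits !inE !negb_or => /andP[/andP[]].
have p2Z : perfect_matching_on e (~: Z) p2.
  move=> v; rewrite inE => vZ.
  have p2vZ : p2 v \notin Z.
    apply/negP => /(walk_prefix_g_exit p2K even_Z vZ) [] vE; case/negP: vZ; rewrite vE.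
      by rewrite -p2b p2K.
    by rewrite /= odd_n -/w wn p2b.
  have [_ _ ep2] := p2P (in_setT v); rewrite inE p2vZ p2K; split=> //.
  by apply: (add_edge_other ep2); apply: contraNneq vZ => ->.
by exists (fun x => if x \in Z then p1 x else p2 x); apply: perfect_matching_on_glue.
Qed.

Let swap_matching_off_prefix n a' :
  odd n -> w n.+1 = a' -> e a' b ->
  a' \notin walk_prefix p1 p2 d n.+1 -> b \notin walk_prefix p1 p2 d n.+1 ->
  perfect_matching_on e (~: walk_prefix p1 p2 d n.+1)
    (fun v => if v == a' then b else if v == b then a' else p2 v).
Proof.
set Z := walk_prefix _ _ _ _ => odd_n wn ea'b a'Z bZ v; rewrite inE => vZ.
have even_Z : ~~ odd n.+1 by rewrite oddS odd_n.
have wZ i : i <= n -> w i \in Z by move=> le_in; apply/walk_prefixP; exists i.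
have neq_a'b : a' != b by apply: contraTneq ea'b => ->; rewrite eirr.
case: (eqVneq v a') => [->|va']; first by rewrite inE bZ eqxx eq_sym (negbTE neq_a'b).
case: (eqVneq v b) => [->|vb]; first by rewrite inE a'Z eqxx esym.
have p2vZ : p2 v \notin Z.
  apply/negP => /(walk_prefix_g_exit p2K even_Z vZ) [] vE.
    by move: vb; rewrite vE -p2b p2K eqxx.
  by move: va'; rewrite vE -/w wn eqxx.
have p2va' : p2 v != a'.
  by apply: contraNneq vZ => p2vE; rewrite -[v]p2K p2vE -wn /w /= odd_n p2K -/w wZ.
have p2vb : p2 v != b by apply: contraNneq vZ => p2vE; rewrite -[v]p2K p2vE p2b (wZ 0).
have [_ _ ep2] := p2P (in_setT v).
rewrite inE p2vZ (negbTE p2va') (negbTE p2vb) p2K; split => //.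
by apply: (add_edge_other ep2) => //; apply: contraNneq vZ => ->; apply: (wZ 0).
Qed.

(* The walk meets a' in {a, c} first: use p1 on the walk before a', the edge
   a'b, and p2 elsewhere. *)
Lemma exchange_at_ac a' n :
  a' \in [set a; c] -> w n = a' -> (forall i, i < n -> w i \notin hits) ->
  exists p, perfect_matching_on e [set: V] p.
Proof.
move=> a'_ac wn before_n.
have a'_hits : a' \in hits by case/set2P: a'_ac => ->; rewrite /hits !inE eqxx ?orbT.
have p1a'_hits : p1 a' \in hits.
  by case/set2P: a'_ac => ->; [rewrite p1a | rewrite -p1a p1K];
    rewrite /hits !inE eqxx ?orbT.
have ea'b : e a' b by case/set2P: a'_ac => ->; rewrite // esym.
case: n wn before_n => [w0 _|n wn before_n].
  by rewrite -w0 in a'_hits; case/negP: d_hits.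
have odd_n : odd n.
  apply: contraT => even_n; case/negP: (before_n n (ltnSn n)).
  by rewrite (_ : w n = p1 a') // -wn /w /= (negbTE even_n) p1K.
pose Z := walk_prefix p1 p2 d n.+1.
have Z_hits z : z \in Z -> z \notin hits by case/walk_prefixP => i /before_n + ->.
have a'Z : a' \notin Z by apply: contraTN a'_hits; apply: Z_hits.
have bZ : b \notin Z.
  by apply: contraTN (_ : b \in hits) => [/Z_hits|] //; rewrite !inE eqxx orbT.
have p1Z : perfect_matching_on e Z p1.
  apply: p1_matching_on_prefix => [|z /Z_hits]; first by rewrite oddS odd_n.
  by rewrite /hits !inE !negb_or => /andP[/andP[]].
have p'Z := swap_matching_off_prefix odd_n wn ea'b a'Z bZ.
by eexists; apply: perfect_matching_on_glue p1Z p'Z.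
Qed.

Lemma exchange_perfect_matching : exists p, perfect_matching_on e [set: V] p.
Proof.
have [n _ wnd] := alt_walk_return p1K p2K d.
have hit_n : w n \in hits by rewrite -[w n]p2K wnd -p2b p2K /hits !inE eqxx orbT.
case: (ex_minnP (ex_intro (fun i => w i \in hits) n hit_n)) => m hit_m min_m.
have before_m i : i < m -> w i \notin hits.
  by move=> lt_im; apply: contraTN lt_im => /min_m; rewrite -leqNgt.
move: hit_m; rewrite /hits !inE => /orP[/orP[]|] /eqP wm.
- by apply: (exchange_at_ac _ wm) => //; rewrite !inE eqxx.
- exact: exchange_at_b wm before_m.
- by apply: (exchange_at_ac _ wm) => //; rewrite !inE eqxx orbT.
Qed.

End Exchange.

Lemma perfect_matching_exchange e a b c d p1 p2 :
  symmetric e -> irreflexive e -> e a b -> e b c -> a != c -> ~~ e b d -> b != d ->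
  perfect_matching_on (add_edge e a c) [set: V] p1 ->
  perfect_matching_on (add_edge e b d) [set: V] p2 ->
  exists p, perfect_matching_on e [set: V] p.
Proof.
move=> esym eirr eab ebc neq_ac nebd neq_bd p1P p2P.
have [p1a|] := eqVneq (p1 a) c; last by exists p1; apply: add_edge_unused p1P _.
have [p2b|] := eqVneq (p2 b) d; last by exists p2; apply: add_edge_unused p2P _.
exact: exchange_perfect_matching p1P p2P p1a p2b.
Qed.
Lemma universalP e u v : u \in universal e -> v != u -> e u v.
Proof. by rewrite inE => /forallP /(_ v) /implyP. Qed.

Lemma card_nonedges_add_edge e u v :
  u != v -> ~~ e u v -> #|nonedges (add_edge e u v)| < #|nonedges e|.
Proof.
move=> neq_uv neuv; apply: proper_card; apply/properP; split.
  by apply/subsetP => -[x y]; rewrite !inE /add_edge /= !negb_or => /andP[-> /andP[-> _]].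
by exists (u, v); rewrite !inE /= ?neq_uv ?neuv // /add_edge !eqxx orbT.
Qed.

Lemma tutte_condition_sub e e' : subrel e e' -> tutte_condition e -> tutte_condition e'.
Proof.
move=> ee' etutte X P PP; apply: etutte => C /PP [oddC disjC sepC].
by split=> // x y xC /ee'; apply: sepC.
Qed.

Lemma tutte_condition_even e : tutte_condition e -> ~~ odd #|V|.
Proof.
move=> etutte; apply/negP => oddV.
suff : #|[set [set: V]]| <= #|set0 : {set V}| by rewrite cards1 cards0.
apply: etutte => [C /set1P ->|].
  split; [by rewrite cardsT | by rewrite -setI_eq0 setI0 | by move=> x y _ _; rewrite inE].
exact: trivIset1.
Qed.

Section CliqueComponents.
Variable e : rel V.
Hypotheses (esym : symmetric e) (eirr : irreflexive e) (etutte : tutte_condition e).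
Hypothesis nbhd_clique :
  forall a b c, b \notin universal e -> e a b -> e b c -> a != c -> e a c.

Let U := universal e.
Let W := ~: U.
Let comp x := [set y in W | (x == y) || e x y].
Let comps := comp @: W.

Let adj_refl_trans x y z :
  y \in W -> (x == y) || e x y -> (y == z) || e y z -> (x == z) || e x z.
Proof.
move=> yW; case: (eqVneq x y) => [-> //|neq_xy] /= exy.
case: (eqVneq y z) => [<-|neq_yz] /= eyz; first by rewrite exy orbT.
case: (eqVneq x z) => //= neq_xz; apply: nbhd_clique exy eyz neq_xz.
by move: yW; rewrite inE.
Qed.

Let comp_self x : x \in W -> x \in comp x.
Proof. by move=> xW; rewrite inE xW eqxx. Qed.

Let comp_eq x y : x \in W -> y \in comp x -> comp y = comp x.
Proof.
move=> xW; rewrite inE => /andP[yW xy]; apply/setP => z; rewrite !inE.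
congr (_ && _); apply/idP/idP => [|xz]; first exact: adj_refl_trans yW xy.
by apply: (adj_refl_trans xW _ xz); rewrite eq_sym esym.
Qed.

Let comps_trivI : trivIset comps.
Proof.
apply/trivIsetP => _ _ /imsetP[x xW ->] /imsetP[y yW ->] neq_xy.
rewrite -setI_eq0; apply: contraNT neq_xy => /set0Pn [z]; rewrite inE => /andP[zx zy].
by rewrite -(comp_eq xW zx) -(comp_eq yW zy).
Qed.

Let comp_props C : C \in comps -> [/\ C \subset W, clique e C & separates e U C].
Proof.
case/imsetP => x xW ->; split.
- by apply/subsetP => y; rewrite inE => /andP[].
- move=> y z; rewrite !inE => /andP[_ xy] /andP[_ xz] neq_yz.
  have yx : (y == x) || e y x by rewrite eq_sym esym.
  by move: (adj_refl_trans xW yx xz); rewrite (negbTE neq_yz).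
- move=> y z; rewrite in_set => /andP[yW xy] eyz; apply/orP.
  case: (boolP (z \in U)) => zU; [by right | left].
  rewrite in_set in_setC zU /=; apply: adj_refl_trans yW xy _.
  by rewrite eyz orbT.
Qed.

Let odd_comps := [set C in comps | odd #|C|].

Let card_odd_comps : #|odd_comps| <= #|U|.
Proof.
have sub_comps : odd_comps \subset comps by apply/subsetP => C; rewrite inE => /andP[].
apply: (etutte _ (trivIsetS sub_comps comps_trivI)) => C.
rewrite inE => /andP[/comp_props [CW _ sepC] oddC]; split=> //.
by rewrite disjoints_subset.
Qed.

Section Augmentation.
Variable phi : {set V} -> V.
Hypothesis phi_inj : {in odd_comps &, injective phi}.
Hypothesis phiU : {in odd_comps, forall C, phi C \in U}.

Let blk C := if C \in odd_comps then phi C |: C else C.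
Let blocks := blk @: comps.

Let comp_notin_U C z : C \in comps -> z \in C -> z \notin U.
Proof. by case/comp_props => /subsetP CW _ _ /CW; rewrite inE. Qed.

Let blocks_trivI : trivIset blocks.
Proof.
have blk_mem C z : z \in blk C -> z \in C \/ (C \in odd_comps /\ z = phi C).
  by rewrite /blk; case: ifP => [CO /setU1P [->|]|_]; [right | left | left].
apply/trivIsetP => _ _ /imsetP[C CP ->] /imsetP[C' C'P ->] neq_blk.
have neqC : C != C' by apply: contraNneq neq_blk => ->.
rewrite -setI_eq0; apply/eqP/setP => z; rewrite in_setI in_set0.
apply/negP => /andP[/blk_mem zC /blk_mem zC'].
case: zC zC' => [zC|[CO ->]] [zC'|[C'O zE]].
- have := trivIsetP comps_trivI C C' CP C'P neqC; rewrite -setI_eq0.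
  by move=> /eqP /setP /(_ z); rewrite !inE zC zC'.
- by move: (comp_notin_U CP zC); rewrite zE phiU.
- by move: (comp_notin_U C'P zC'); rewrite phiU.
- by move: neqC; rewrite (phi_inj CO C'O zE) eqxx.
Qed.

Let blocks_even_clique B : B \in blocks -> ~~ odd #|B| /\ clique e B.
Proof.
case/imsetP => C CP ->; have [_ clC _] := comp_props CP; rewrite /blk.
case: ifP => [CO|]; last by rewrite inE CP /= => /negbT.
have phiC : phi C \notin C by apply: contraTN (phiU CO) => /(comp_notin_U CP).
split; first by rewrite cardsU1 phiC /=; move: CO; rewrite inE => /andP[_ ->].
move=> x y /setU1P [->|xC] /setU1P [->|yC] neq_xy; rewrite ?eqxx // in neq_xy.
- by apply: universalP; rewrite 1?eq_sym // phiU.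
- by rewrite esym; apply: universalP; rewrite ?phiU.
- exact: clC.
Qed.

Lemma perfect_matching_of_augmentation : exists p, perfect_matching_on e [set: V] p.
Proof.
have pY := perfect_matching_on_partition blocks_trivI blocks_even_clique.
set Y := cover _ in pY.
have W_Y : W \subset Y.
  apply/subsetP => x xW; apply/bigcupP; exists (blk (comp x)); first exact/imset_f/imset_f.
  by rewrite /blk; case: ifP => _; rewrite ?in_setU1 comp_self ?orbT.
have pR : perfect_matching_on e (~: Y) (pairing (~: Y)).
  apply: pairing_clique => [|x y].
    move: (tutte_condition_even etutte); rewrite -(cardsC Y) oddD.
    by rewrite (negbTE (perfect_matching_on_even eirr pY)).
  rewrite !inE => xY yY neq_xy; apply: universalP; last by rewrite eq_sym.
  by apply: contraR xY => /negbTE xU; apply: (subsetP W_Y); rewrite inE xU.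
by eexists; apply: perfect_matching_on_glue pY pR.
Qed.

End Augmentation.

Lemma tutte_clique_components : exists p, perfect_matching_on e [set: V] p.
Proof.
case: (pickP (@predT V)) => [v0 _|V0]; last by exists id => x; have := V0 x.
have [phi phi_inj phiU] := card_le_exists_inj v0 card_odd_comps.
exact: perfect_matching_of_augmentation phi_inj phiU.
Qed.

End CliqueComponents.

Theorem tutte_perfect_matching e :
  symmetric e -> irreflexive e -> tutte_condition e ->
  exists p, perfect_matching_on e [set: V] p.
Proof.
suff: forall n e, #|nonedges e| < n -> symmetric e -> irreflexive e ->
    tutte_condition e -> exists p, perfect_matching_on e [set: V] p.
  by apply; apply: ltnSn.
elim=> // n IH {}e lt_n esym eirr etutte.
have IH_add u v : u != v -> ~~ e u v ->
    exists p, perfect_matching_on (add_edge e u v) [set: V] p.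
  move=> neq_uv neuv; apply: IH.
  - exact: leq_trans (card_nonedges_add_edge neq_uv neuv) _.
  - exact: add_edge_sym.
  - exact: add_edge_irr.
  - exact: tutte_condition_sub (@sub_add_edge e u v) etutte.
case: (boolP [exists a, exists b, exists c,
    [&& b \notin universal e, e a b, e b c, a != c & ~~ e a c]]).
  case/existsP => a /existsP [b /existsP [c /and5P [bU eab ebc neq_ac neac]]].
  move: bU; rewrite inE negb_forall => /existsP [d].
  rewrite negb_imply => /andP[neq_db nebd].
  have [p1 p1P] := IH_add a c neq_ac neac.
  have neq_bd : b != d by rewrite eq_sym.
  have [p2 p2P] := IH_add b d neq_bd nebd.
  exact: perfect_matching_exchange p1P p2P.
move=> no_triple; apply: tutte_clique_components => // a b c bU eab ebc neq_ac.
apply: contraNT no_triple => neac; apply/existsP; exists a; apply/existsP; exists b.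
by apply/existsP; exists c; rewrite bU eab ebc neq_ac neac.
Qed.

End Tutte.

(** * Edges leaving odd sets *)

Lemma card_setI_sum (T : finType) (A B : {set T}) : #|A :&: B| = \sum_(x in A) (x \in B).
Proof.
rewrite -sum1_card (eq_bigl (fun x => (x \in A) && (x \in B))) => [|x]; last by rewrite inE.
by rewrite big_mkcondr /=; apply: eq_bigr => x _; case: (x \in B).
Qed.

Section EdgeCounting.
Variables (V : finType) (e : rel V).
Hypotheses (esym : symmetric e) (eirr : irreflexive e).
Implicit Types (A B C X : {set V}).

Lemma sum_card_nbhd_sym A B :
  \sum_(u in A) #|B :&: nbhd e u| = \sum_(x in B) #|A :&: nbhd e x|.
Proof.
under eq_bigr do rewrite card_setI_sum.
under [RHS]eq_bigr do rewrite card_setI_sum.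
by rewrite exchange_big; apply: eq_bigr => x _; apply: eq_bigr => u _; rewrite !inE esym.
Qed.

Section ProperColouring.
Variables (C : {set V}) (D : nat) (c : V -> V -> 'I_D).
Hypothesis c_sym : {in C &, forall x y, e x y -> c x y = c y x}.
Hypothesis c_proper :
  {in C, forall x, {in C &, forall y z, e x y -> e x z -> y != z -> c x y != c x z}}.

Let c_inj x y z : x \in C -> y \in C -> z \in C -> e x y -> e x z -> c x y = c x z -> y = z.
Proof.
move=> xC yC zC exy exz cE; apply/eqP/negPn/negP => /(c_proper xC yC zC exy exz).
by rewrite cE eqxx.
Qed.

Definition colour_class k := [set x in C | [exists y in C, e x y && (c x y == k)]].

Lemma colour_class_even k : ~~ odd #|colour_class k|.
Proof.
pose partner x := odflt x [pick y in C | e x y && (c x y == k)].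
have partnerE x y : x \in C -> y \in C -> e x y -> c x y = k -> partner x = y.
  move=> xC yC exy cxy; rewrite /partner; case: pickP => [z /and3P [zC exz /eqP cxz]|none].
    by apply: c_inj xC zC yC exz exy _; rewrite cxz cxy.
  by have := none y; rewrite yC exy cxy eqxx.
apply: (perfect_matching_on_even eirr (f := partner)) => x.
rewrite inE => /andP[xC /exists_inP [y yC /andP[exy /eqP cxy]]].
have eyx : e y x by rewrite esym.
have cyx : c y x = k by rewrite -c_sym.
rewrite (partnerE x y) // (partnerE y x) //; split=> //.
by rewrite inE yC; apply/exists_inP; exists x; rewrite // eyx cyx eqxx.
Qed.

Lemma card_nbhd_colour_classes x :
  x \in C -> #|C :&: nbhd e x| = \sum_(k < D) (x \in colour_class k).
Proof.
move=> xC; rewrite -(card_in_imset (f := c x)); last first.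
  by move=> y z; rewrite !inE => /andP[yC exy] /andP[zC exz]; apply: c_inj.
have -> : c x @: (C :&: nbhd e x) = [set k | x \in colour_class k].
  apply/setP => k; rewrite !inE xC /=; apply/imsetP/exists_inP.
    by case=> y; rewrite !inE => /andP[yC exy] ->; exists y; rewrite ?exy ?eqxx.
  by case=> y yC /andP[exy /eqP <-]; exists y; rewrite // !inE yC.
by rewrite -sum1dep_card big_mkcond /=; apply: eq_bigr => k _; case: (_ \in _).
Qed.

Lemma sum_card_inner_nbhd : odd #|C| -> \sum_(x in C) #|C :&: nbhd e x| <= D * #|C|.-1.
Proof.
move=> oddC; rewrite (eq_bigr _ card_nbhd_colour_classes) exchange_big /=.
rewrite -[D in D * _]card_ord -sum_nat_const; apply: leq_sum => k _.
have sub_kC : colour_class k \subset C by apply/subsetP => x; rewrite inE => /andP[].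
rewrite -card_setI_sum (setIidPr sub_kC) -ltnS prednK ?odd_gt0 //.
rewrite ltn_neqAle subset_leq_card // andbT.
by apply: contraNneq (colour_class_even k) => ->.
Qed.

Lemma odd_set_out_edges X :
  odd #|C| -> [disjoint C & X] -> separates e X C -> {in C, forall x, deg e x = D} ->
  D <= \sum_(x in C) #|X :&: nbhd e x|.
Proof.
move=> oddC disjCX sepC degC.
have deg_split x : x \in C -> D = #|C :&: nbhd e x| + #|X :&: nbhd e x|.
  move=> xC; rewrite -(degC x xC) /deg -(cardsID C (nbhd e x)) setIC; congr (_ + _).
  apply: eq_card => y; rewrite !inE; case: (boolP (y \in C)) => /= [yC|nyC].
    by rewrite (disjointFr disjCX yC).
  apply/idP/idP => [exy|/andP[] //]; rewrite exy andbT.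
  by have := sepC x y xC exy; rewrite (negbTE nyC).
have sum_split : \sum_(x in C) D =
    \sum_(x in C) #|C :&: nbhd e x| + \sum_(x in C) #|X :&: nbhd e x|.
  by rewrite -big_split; apply: eq_bigr.
move: sum_split (sum_card_inner_nbhd oddC); rewrite sum_nat_const.
by rewrite -(prednK (odd_gt0 oddC)) /= mulSn mulnC; lia.
Qed.

End ProperColouring.
End EdgeCounting.

Lemma odd_card_cover (T : finType) (P : {set {set T}}) :
  trivIset P -> (forall C, C \in P -> odd #|C|) -> odd #|cover P| = odd #|P|.
Proof.
move=> /eqP <- oddP; rewrite -sum1_card.
rewrite (big_morph odd (id1 := false) (op1 := addb) oddD) //.
rewrite [in RHS](big_morph odd (id1 := false) (op1 := addb) oddD) //.
by apply: eq_bigr => C /oddP ->.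
Qed.

Section TutteCriterion.
Variables (V : finType) (e : rel V) (S : {set V}) (D : nat).
Hypotheses (esym : symmetric e) (D_gt0 : 0 < D).
Hypothesis S_deg : forall x, #|S :&: nbhd e x| <= D.
Hypothesis S_out : forall X C : {set V},
  C \subset S -> odd #|C| -> [disjoint C & X] -> separates e X C ->
  D <= \sum_(x in C) #|X :&: nbhd e x|.

Lemma card_odd_sets_in_le (X : {set V}) (Q : {set {set V}}) :
  (forall C : {set V}, C \in Q ->
     [/\ C \subset S, odd #|C|, [disjoint C & X] & separates e X C]) ->
  trivIset Q -> #|Q| <= #|X|.
Proof.
move=> QP trivQ; rewrite -(leq_pmul2l D_gt0) [D * #|Q|]mulnC -sum_nat_const.
apply: (@leq_trans (\sum_(C in Q) \sum_(x in C) #|X :&: nbhd e x|)).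
  by apply: leq_sum => C /QP [CS oddC disjC sepC]; apply: S_out.
rewrite -big_trivIset // sum_card_nbhd_sym // mulnC -sum_nat_const.
apply: leq_sum => x _; apply: leq_trans (S_deg x); apply/subset_leq_card/setSI.
by apply/bigcupsP => C /QP [].
Qed.
Hypothesis clique_outside : clique e (~: S).

Lemma card_odd_sets_out_le1 (X : {set V}) (P : {set {set V}}) :
  (forall C : {set V}, C \in P -> [/\ odd #|C|, [disjoint C & X] & separates e X C]) ->
  trivIset P -> #|P :\: [set C : {set V} | C \subset S]| <= 1.
Proof.
move=> PP trivP; apply/card_le1_eqP => C C'; rewrite !inE.
move=> /andP[/subsetPn [k kC kS] CP] /andP[/subsetPn [k' kC' kS'] C'P].
apply/eqP/negPn/negP; rewrite eq_sym => neqC.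
have disjC := trivIsetP trivP C C' CP C'P neqC.
have neq_kk' : k != k' by apply: contraTneq kC' => <-; rewrite (disjointFr disjC kC).
have [_ _ sepC] := PP C CP; have [_ disjC'X _] := PP C' C'P.
have ekk' : e k k' by apply: clique_outside; rewrite ?inE.
case/orP: (sepC k k' kC ekk') => [k'C|k'X].
  by rewrite (disjointFr disjC k'C) in kC'.
by rewrite (disjointFr disjC'X kC') in k'X.
Qed.

Section Remainder.
Variables (X : {set V}) (P : {set {set V}}).
Hypothesis PP : forall C : {set V}, C \in P ->
  [/\ odd #|C|, [disjoint C & X] & separates e X C].
Hypothesis trivP : trivIset P.

Let R := ~: (X :|: cover P).

Let R_P u C : u \in R -> C \in P -> u \notin C.
Proof.
rewrite !inE negb_or => /andP[_ ucover] CP.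
by apply: contra ucover; apply/subsetP/bigcup_sup.
Qed.

Lemma odd_card_remainder : odd #|R| = odd #|V| (+) odd #|X| (+) odd #|P|.
Proof.
have disjXcover : X :&: cover P = set0.
  apply/setP => u; rewrite in_setI in_set0; apply/negP => /andP[uX /bigcupP [C CP uC]].
  by have [_ disjC _] := PP CP; rewrite (disjointFr disjC uC) in uX.
rewrite -(cardsC (X :|: cover P)) cardsU disjXcover cards0 subn0 !oddD.
rewrite (odd_card_cover trivP) => [|C /PP []//].
by case: (odd #|X|); case: (odd #|P|); case: (odd #|R|).
Qed.

Lemma remainder_sep : [disjoint R & X] /\ separates e X R.
Proof.
split; first by rewrite disjoint_sym disjoints_subset setCK subsetUl.
move=> u v uR euv; apply/orP; case: (boolP (v \in X)) => vX; [by right | left].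
rewrite !inE (negbTE vX) /=; apply/negP => /bigcupP [C CP vC]; have [_ _ sepC] := PP CP.
have evu : e v u by rewrite esym.
case/orP: (sepC v u vC evu) => [uC|uX]; first by case/negP: (R_P uR CP).
by move: uR; rewrite !inE uX.
Qed.

Lemma remainder_sub C : C \in P -> ~~ (C \subset S) -> R \subset S.
Proof.
move=> CP /subsetPn [k kC kS]; apply/subsetP => u uR; apply: contraT => uS.
have neq_ku : k != u by apply: contraNneq (R_P uR CP) => <-.
have eku : e k u by apply: clique_outside; rewrite ?inE.
have [_ _ sepC] := PP CP.
case/orP: (sepC k u kC eku) => [uC|uX]; first by case/negP: (R_P uR CP).
by move: uR; rewrite !inE uX.
Qed.

Lemma remainder_disjoint C : C \in P -> [disjoint R & C].
Proof.
move=> CP; rewrite -setI_eq0; apply/eqP/setP => u; rewrite in_setI in_set0.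
by apply/negP => /andP[uR uC]; case/negP: (R_P uR CP).
Qed.

End Remainder.

Lemma tutte_condition_of_degree_bound : ~~ odd #|V| -> tutte_condition e.
Proof.
move=> evenV X P PP trivP.
pose inS := [set C : {set V} | C \subset S].
have trivP0 := trivIsetS (subsetIl P inS) trivP.
have card_P0 : #|P :&: inS| <= #|X|.
  apply: card_odd_sets_in_le trivP0 => C.
  by rewrite !inE => /andP[/PP [oddC disjC sepC] CS].
have card_P1 : #|P :\: inS| <= 1 := card_odd_sets_out_le1 PP trivP.
rewrite leqNgt; apply/negP => lt_XP.
have [card_P0E card_P1E] : #|P :&: inS| = #|X| /\ #|P :\: inS| = 1.
  move: lt_XP card_P0 card_P1; rewrite -(cardsID inS P).
  by move: #|P :&: inS| #|P :\: inS| => a b; lia.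
have [Cs] : exists Cs, Cs \in P :\: inS by apply/card_gt0P; rewrite card_P1E.
rewrite !inE => /andP[CsS CsP].
pose R := ~: (X :|: cover P).
have odd_R : odd #|R|.
  rewrite (odd_card_remainder PP trivP) (negbTE evenV) -(cardsID inS P) card_P0E card_P1E.
  by rewrite addn1 oddS addbN addbb.
have [disjRX sepR] := remainder_sep PP.
have R_P0 : R \notin P :&: inS.
  have [u uR] : exists u, u \in R by apply/card_gt0P; apply: odd_gt0.
  apply/negP => /setIP [RP _]; have := remainder_disjoint X RP.
  by rewrite -setI_eq0 setIid => /eqP R0; move: uR; rewrite /R R0 inE.
suff : #|R |: (P :&: inS)| <= #|X| by rewrite cardsU1 R_P0 card_P0E ltnn.
apply: card_odd_sets_in_le => [C|].
  case/setU1P => [->|/setIP [/PP [? ? ?]]]; rewrite ?inE //.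
  split=> //; exact: (remainder_sub PP CsP CsS).
have set0_P0 : set0 \notin P :&: inS by apply/negP => /setIP [/PP []]; rewrite cards0.
have disjR C : C \in P :&: inS -> [disjoint R & C] by case/setIP => /(remainder_disjoint X).
by have [] := trivIsetU1 disjR trivP0 set0_P0.
Qed.

End TutteCriterion.

(** * The doubled graph *)

Lemma matching_of_partner (T : finType) (e : rel T) (K : {set T}) (f : T -> T) :
  (forall x, x \in K -> e x (f x) /\ f (f x) = x) ->
  matching e [set [set x; f x] | x in K] /\ saturates [set [set x; f x] | x in K] K.
Proof.
move=> fK; split; last by move=> x xK; exists [set x; f x]; [apply: imset_f | apply: set21].
split=> [_ /imsetP [x xK ->]|_ _ /imsetP [x xK ->] /imsetP [y yK ->] neq_xy].
  by exists x, (f x); case: (fK x xK).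
have [_ fxK] := fK x xK; have [_ fyK] := fK y yK.
rewrite -setI_eq0; apply/eqP/setP => z; rewrite in_setI in_set0.
apply: contraNF neq_xy => /andP[/set2P zx /set2P zy].
suff [-> // | ->] : x = y \/ x = f y by rewrite fyK setUC.
case: zx zy => -> [] E; [left | right | right | left] => //.
  by rewrite -E fxK.
by rewrite -fxK E fyK.
Qed.

Section DoubledGraph.
Variables (T : finType) (e : rel T) (K : {set T}).
Hypotheses (esym : symmetric e) (eirr : irreflexive e).

Definition double_graph : rel (bool * T) :=
  fun u v => ((u.1 == v.1) && e u.2 v.2) || [&& u.2 \notin K, v.2 \notin K & u != v].

Definition double_core := [set u : bool * T | u.2 \in K].

Lemma double_graph_sym : symmetric double_graph.
Proof.
move=> u v; rewrite /double_graph; congr (_ || _); first by rewrite eq_sym esym.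
by rewrite andbCA eq_sym.
Qed.

Lemma double_graph_irr : irreflexive double_graph.
Proof. by move=> u; rewrite /double_graph eirr !eqxx /= !andbF. Qed.

Lemma double_graph_core u v :
  v \in double_core -> double_graph u v = (u.1 == v.1) && e u.2 v.2.
Proof. by rewrite inE /double_graph => ->; rewrite andbF orbF. Qed.

Lemma double_core_nbhd u :
  double_core :&: nbhd double_graph u \subset [set (u.1, y) | y in nbhd e u.2].
Proof.
apply/subsetP => -[b y]; rewrite !inE => /andP[vK].
rewrite double_graph_core ?inE // => /andP[/eqP /= <- euy].
by apply: imset_f; rewrite inE.
Qed.

Lemma nbhd_double_core u :
  u \in double_core -> nbhd double_graph u = [set (u.1, y) | y in nbhd e u.2].
Proof.
move=> uK; apply/setP => -[b y]; rewrite inE double_graph_sym double_graph_core //.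
rewrite /=; apply/andP/imsetP => [[/eqP <- eyu]|[z]].
  by exists y; rewrite // inE esym.
by rewrite inE => euz [-> ->]; rewrite eqxx esym.
Qed.

Lemma double_graph_clique : clique double_graph (~: double_core).
Proof.
by move=> u v; rewrite !inE => uK vK neq_uv; rewrite /double_graph uK vK neq_uv orbT.
Qed.

End DoubledGraph.

Lemma saturating_matching_of_colourable (T : finType) (e : rel T) (K : {set T}) D :
  symmetric e -> irreflexive e -> 0 < D -> (forall x, deg e x <= D) ->
  {in K, forall x, deg e x = D} -> has_proper_edge_coloring (induced e K) D ->
  exists M : {set {set T}}, matching e M /\ saturates M K.
Proof.
move=> esym eirr D_gt0 deg_le degK [c [c_sym c_proper]].
pose G := double_graph e K.
have G_tutte : tutte_condition G.
  apply: (@tutte_condition_of_degree_bound _ G (double_core K) D) => //.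
  - exact: double_graph_sym.
  - move=> u; have pair_inj : injective (pair u.1 : T -> bool * T) by move=> y z [].
    apply: leq_trans (deg_le u.2); rewrite /deg -(card_imset _ pair_inj).
    exact/subset_leq_card/double_core_nbhd.
  - move=> X C /subsetP CK oddC disjC sepC.
    have G_induced u v : u \in C -> v \in C -> G u v -> u.1 = v.1 /\ induced e K u.2 v.2.
      move=> /CK uK /CK vK; rewrite /G double_graph_core // => /andP[/eqP -> euv].
      by move: uK vK; rewrite !inE /induced euv andbT => -> ->.
    apply: (@odd_set_out_edges _ G (double_graph_sym K esym) (double_graph_irr K eirr)
      C D (fun u v => c u.2 v.2)) => //.
    + by move=> u v uC vC /(G_induced _ _ uC vC) [_ /c_sym].
    + move=> u uC v w vC wC /(G_induced _ _ uC vC) [uv Kuv] /(G_induced _ _ uC wC) [uw Kuw].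
      move=> neq_vw; apply: c_proper Kuv Kuw _; apply: contraNneq neq_vw => vw2.
      by rewrite [v]surjective_pairing [w]surjective_pairing -uv -uw vw2.
    + move=> u /CK uK; rewrite /deg nbhd_double_core // card_imset; last by move=> y z [].
      by apply: degK; rewrite inE in uK.
  - exact: double_graph_clique.
  - by rewrite card_prod card_bool mul2n odd_double.
have [p pP] :=
  tutte_perfect_matching (double_graph_sym K esym) (double_graph_irr K eirr) G_tutte.
pose f x := (p (true, x)).2.
exists [set [set x; f x] | x in K]; apply: matching_of_partner => x xK.
have xK2 : (true, x) \in double_core K by rewrite inE.
have [_ pK] := pP (true, x) (in_setT _).
rewrite (double_graph_sym K esym) double_graph_core // => /andP[/eqP side exf].
have pE : p (true, x) = (true, f x) by rewrite /f; case: (p (true, x)) side => ? ? /= ->.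
by rewrite esym exf /f -pE pK.
Qed.

Theorem theorem5p2 (T : finType) (e : rel T) :
  simple_graph e -> 0 < max_deg e ->
  has_proper_edge_coloring (induced e (core e)) (max_deg e) ->
  exists M : {set {set T}}, matching e M /\ saturates M (core e).
Proof.
move=> [esym eirr] D_gt0; apply: saturating_matching_of_colourable => //.
  by move=> x; apply: leq_bigmax.
by move=> x; rewrite inE => /eqP.
Qed.
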